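(* For a root $\beta=t_i-t_j$ of $\mathrm{SL}_n(\mathbb C)$, $w_\beta$ is a maximal element (in the Bruhat order) of $\Omega_H=\{w_\gamma:\gamma\in\Delta_H\}$ if and only if $(i,j)$ is a corner of the modified Hessenberg stair shape.
   Context: Let $G=\mathrm{SL}_n(\mathbb C)$, $n\ge2$, $B$ upper triangular, $T$ diagonal, $W=S_n$ with Bruhat order; $t_i-t_j$ denotes the root $\mathrm{diag}(t_1,\dots,t_n)\mapsto t_it_j^{-1}$ with root space $\mathbb C E_{ij}$. A Hessenberg function is a weakly increasing $h:\{1,\dots,n\}\to\{1,\dots,n\}$ with $j\le h(j)$; its Hessenberg subspace is $H=\{(a_{ij})\in\mathfrak{sl}_n: a_{ij}=0\text{ for }i>h(j)\}$ and $\Delta_H$ is the set of roots $t_i-t_j$ with $E_{ij}\in H$. For a root $\beta=t_i-t_j$, $w_\beta\in S_n$ denotes the longest permutation with $w_\beta(i)=1$ and $w_\beta(j)=n$. With the convention $h(0):=0$, the modified Hessenberg function is $\overline h(j)=j-1$ if $h(j-1)=j-1$ and $h(j)=j$, and $\overline h(j)=h(j)$ otherwise; set $\overline h(0):=0$. A pair $(i,j)\in\{1,\dots,n\}^2$ is a corner of the modified Hessenberg stair shape if $i=\overline h(j)$ and $\overline h(j-1)<\overline h(j)$. *)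

From HB Require Import structures.
From Stdlib Require Import Relations.
From mathcomp Require Import all_boot all_order all_fingroup.
Set Implicit Arguments. Unset Strict Implicit. Unset Printing Implicit Defensive.

(* Conventions: the paper's indices 1..n are represented by ordinals of 'I_n,
   the paper's index k corresponding to the ordinal with value k-1.
   Permutations of {1..n} are elements of {perm 'I_n}. *)

Definition perm_length (n : nat) (w : {perm 'I_n}) : nat :=
  #|[set p : 'I_n * 'I_n | (p.1 < p.2) && (w p.2 < w p.1)]|.

Definition bruhat_step (n : nat) (u v : {perm 'I_n}) : Prop :=
  exists a b : 'I_n, a != b /\ v = (u * tperm a b)%g /\ perm_length u < perm_length v.

Definition bruhat_le (n : nat) : relation {perm 'I_n} :=
  clos_refl_trans {perm 'I_n} (@bruhat_step n).

Definition bruhat_lt (n : nat) (u v : {perm 'I_n}) : Prop :=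
  bruhat_le u v /\ u <> v.

(* w is w_beta for beta = t_i - t_j : the longest permutation with
   w(i) = 1 and w(j) = n (0-based: w i = 0, w j = n-1). *)
Definition is_w_root (n : nat) (i j : 'I_n) (w : {perm 'I_n}) : Prop :=
  [/\ nat_of_ord (w i) = 0, nat_of_ord (w j) = n.-1 &
      forall v : {perm 'I_n}, nat_of_ord (v i) = 0 -> nat_of_ord (v j) = n.-1 ->
        perm_length v <= perm_length w].

(* Hessenberg function h : {1..n} -> {1..n} (values outside 1..n irrelevant). *)
Definition hessenberg (n : nat) (h : nat -> nat) : Prop :=
  (forall j, 1 <= j <= n -> j <= h j <= n) /\
  (forall j k, 1 <= j -> j <= k -> k <= n -> h j <= h k).

Definition h0 (h : nat -> nat) (k : nat) : nat := if k == 0 then 0 else h k.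

Definition hbar (h : nat -> nat) (j : nat) : nat :=
  if j == 0 then 0
  else if (h0 h j.-1 == j.-1) && (h j == j) then j.-1 else h j.

(* Root t_i - t_j (paper indices i,j, i <> j) lies in Delta_H: E_ij in H, i.e. i <= h(j). *)
Definition in_DeltaH (h : nat -> nat) (n : nat) (i j : 'I_n) : Prop :=
  i != j /\ i.+1 <= h j.+1.

Definition in_OmegaH (h : nat -> nat) (n : nat) (w : {perm 'I_n}) : Prop :=
  exists i j : 'I_n, in_DeltaH h i j /\ is_w_root i j w.

Definition maximal_in_OmegaH (h : nat -> nat) (n : nat) (w : {perm 'I_n}) : Prop :=
  in_OmegaH h w /\ ~ (exists v, in_OmegaH h v /\ bruhat_lt w v).

Definition corner (h : nat -> nat) (i j : nat) : Prop :=
  i = hbar h j /\ hbar h j.-1 < hbar h j.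

(* The permutation w_{t_i - t_j} puts 1 in position i, n in position j and
   decreases elsewhere.  A length-increasing Bruhat step can only move the value
   1 to the right and the value n to the left, so w_{t_i - t_j} <= w_{t_k - t_l}
   forces i <= k and l <= j, and at a corner (i, j) no other root of Delta_H
   passes this test.  Conversely, if (i, j) is not a corner, then moving 1 one
   position to the right, moving n one position to the left (skipping the other
   special position), or exchanging 1 and n gives a root of Delta_H whose
   permutation is obtained from w_{t_i - t_j} by one transposition increasing
   the length. *)

From Stdlib Require Import Relations.
From mathcomp Require Import all_boot all_fingroup zify.
Set Implicit Arguments. Unset Strict Implicit. Unset Printing Implicit Defensive.

Section Permutations.
Variable n : nat.
Implicit Types (u v w s : {perm 'I_n}) (a b c q p x y : 'I_n).

Lemma val_tperm q p x :
  val (tperm q p x) = if val x == val q then val p else if val x == val p then val q else val x.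
Proof.
rewrite !val_eqE; case: tpermP => [->|->|/eqP/negPf-> /eqP/negPf->] //; rewrite eqxx //.
by case: eqP => [->|].
Qed.

Lemma tperm_lt q p x y : q < p -> x < y -> (x == q -> p < y) -> (y == p -> x < q) ->
  tperm q p x < tperm q p y.
Proof. by rewrite -!val_eqE !val_tperm /=; do !case: eqP; lia. Qed.

Definition inversions u : {set 'I_n * 'I_n} :=
  [set xy : 'I_n * 'I_n | (xy.1 < xy.2) && (u xy.2 < u xy.1)].

Lemma perm_lengthE u : perm_length u = #|inversions u|.
Proof. by []. Qed.

Lemma mulg_tpermE u q p : (u * tperm (u q) (u p) = tperm q p * u)%g.
Proof. by rewrite -tpermJ /conjg mulgA mulgV mul1g. Qed.

(* Swapping the entries in positions q < p maps the inversions of u injectively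
   to inversions of the result other than (q, p): pairs meeting the open
   interval (q, p) are kept, the others are moved by the transposition. *)
Lemma perm_length_swap u q p :
  q < p -> u q < u p -> perm_length u < perm_length (tperm q p * u)%g.
Proof.
move=> qp uqp; set v := (tperm q p * u)%g.
have vE z : v z = u (tperm q p z) by rewrite permM.
pose inside (z : 'I_n) := q < z < p.
have inside_tperm z : inside (tperm q p z) = inside z.
  by rewrite /inside val_tperm /=; do !case: eqP; lia.
pose psi (xy : 'I_n * 'I_n) :=
  if inside xy.1 || inside xy.2 then xy else (tperm q p xy.1, tperm q p xy.2).
have psiK : involutive psi.
  move=> [x y]; rewrite /psi /=; have [ins|/negPf out] := boolP (inside x || inside y).
    by rewrite /= ins.
  by rewrite /= !inside_tperm out !tpermK.
have qp_inv : (q, p) \in inversions v by rewrite inE /= !vE tpermL tpermR qp.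
have psi_inv : [set psi xy | xy in inversions u] \subset inversions v :\ (q, p).
  apply/subsetP => _ /imsetP [[x y] + ->]; rewrite !inE /psi /= => /andP [xy uyx].
  case: ifP => [ins|/negbT out]; apply/and3P; split => //=; rewrite ?vE ?tpermK //.
  - by apply/eqP => -[ex ey]; move: ins; rewrite ex ey /inside; lia.
  - by case: tpermP => [ex|ex|_ _]; case: tpermP => [ey|ey|_ _];
      subst; move: ins; rewrite /inside; lia.
  - apply/eqP => -[ex ey]; have := tpermK q p x; have := tpermK q p y.
    by rewrite ex ey tpermL tpermR => yq xp; subst; lia.
  - apply: tperm_lt => // /eqP e; subst; move: out uyx; rewrite /inside.
    + move=> out uyq; have : y != p by apply: contraTneq uyq => ->; rewrite -leqNgt ltnW.
      by rewrite -val_eqE /=; lia.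
    + move=> out upx; have : x != q by apply: contraTneq upx => ->; rewrite -leqNgt ltnW.
      by rewrite -val_eqE /=; lia.
rewrite (perm_lengthE u) [perm_length v]perm_lengthE -(card_imset _ (inv_inj psiK)).
rewrite (cardsD1 (q, p) (inversions v)) qp_inv.
exact: subset_leq_card.
Qed.

Lemma bruhat_step_ordered u v : bruhat_step u v ->
  exists a b, [/\ a < b, v = (u * tperm a b)%g, perm_length u < perm_length v
                & (u^-1)%g a < (u^-1)%g b].
Proof.
have swap_inv a b : a < b -> perm_length u < perm_length (u * tperm a b)%g ->
    (u^-1)%g a < (u^-1)%g b.
  move=> ab lt; case: ltngtP => // [ba|/val_inj/(can_inj (permKV u)) e]; last first.
    by move: ab; rewrite e ltnn.
  have := @perm_length_swap (u * tperm a b)%g _ _ ba.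
  rewrite -mulg_tpermE !permM !permKV tpermL tpermR -mulgA tperm2 mulg1.
  by move=> /(_ ab); lia.
move=> [a [b [ab [-> lt]]]].
case: (ltngtP a b) => [lab|lba|/val_inj eab]; last by rewrite eab eqxx in ab.
- by exists a, b; split => //; exact: swap_inv.
- by rewrite tpermC in lt *; exists b, a; split => //; exact: swap_inv.
Qed.

Lemma bruhat_le_homo (T : Type) (R : rel T) (f : {perm 'I_n} -> T) :
  reflexive R -> transitive R -> (forall u v, bruhat_step u v -> R (f u) (f v)) ->
  forall u v, bruhat_le u v -> R (f u) (f v).
Proof.
move=> Rrefl Rtrans Rstep u v; elim=> [x y /Rstep|x|x y z _ Rxy _ Ryz] //.
exact: Rtrans Rxy Ryz.
Qed.

Lemma bruhat_le_first u v c : (c : nat) = 0 -> bruhat_le u v -> (u^-1)%g c <= (v^-1)%g c.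
Proof.
move=> c0; apply: (bruhat_le_homo (f := fun w => val ((w^-1)%g c)) leqnn leq_trans).
move=> {}u {}v /bruhat_step_ordered [a [b [ab -> _ uab]]] /=.
rewrite invMg permM tpermV; case: tpermP => [ca|cb|_ _] //; subst; [exact: ltnW | lia].
Qed.

Lemma bruhat_le_last u v c : (c : nat) = n.-1 -> bruhat_le u v -> (v^-1)%g c <= (u^-1)%g c.
Proof.
move=> cn; apply: (bruhat_le_homo (f := fun w => val ((w^-1)%g c)) (R := geq) leqnn).
  by move=> y x z xy zy; exact: leq_trans zy xy.
move=> {}u {}v /bruhat_step_ordered [a [b [ab -> _ uab]]] /=.
rewrite invMg permM tpermV; case: tpermP => [ca|cb|_ _] //; subst.
  by have := ltn_ord b; lia.
exact: ltnW.
Qed.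

Lemma bruhat_lt_length u v : bruhat_lt u v -> perm_length u < perm_length v.
Proof.
move=> [uv]; suff [->//|//] : u = v \/ perm_length u < perm_length v.
elim: uv => [x y /bruhat_step_ordered [_ [_ [_ _ lt _]]]|x|x y z _ [->|xy] _ [<-|yz]];
  by [right | left | right; exact: ltn_trans xy yz].
Qed.

Lemma bruhat_lt_swap u q p : q < p -> u q < u p -> bruhat_lt u (tperm q p * u)%g.
Proof.
move=> qp uqp; have lt := perm_length_swap qp uqp.
split; last by move=> e; rewrite -e ltnn in lt.
apply: rt_step; exists (u q), (u p); rewrite mulg_tpermE; split => //.
by rewrite (inj_eq perm_inj) -val_eqE /= neq_ltn qp.
Qed.

Definition w_root_shape k l u :=
  [/\ (u k : nat) = 0, (u l : nat) = n.-1 &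
      forall x y, x < y -> x \notin [:: k; l] -> y \notin [:: k; l] -> u y < u x].

Lemma perm_val_neq u x y : x != y -> (u x : nat) != u y.
Proof. by apply: contraNneq => /val_inj/perm_inj->. Qed.

Lemma is_w_rootP k l u : is_w_root k l u <-> w_root_shape k l u.
Proof.
split=> [[uk ul longest]|[uk ul desc]].
  split=> // x y xy; rewrite !inE !negb_or => /andP [xk xl] /andP [yk yl].
  case: ltngtP => // [uxy|/val_inj/perm_inj eyx]; last by rewrite eyx ltnn in xy.
  have := perm_length_swap xy uxy.
  by rewrite ltnNge longest // permM tpermD // eq_sym.
split=> // v vk vl; rewrite !perm_lengthE; apply/subset_leq_card/subsetP => -[x y].
rewrite !inE /= => /andP [xy vyx]; rewrite xy /=.
have [exk|xk] := eqVneq x k; first by subst; lia.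
have [eyl|yl] := eqVneq y l; first by have := ltn_ord (v x); subst; lia.
have [eyk|yk] := eqVneq y k; first by have := perm_val_neq u xk; subst; lia.
have [exl|xl] := eqVneq x l.
  by have := perm_val_neq u yl; have := ltn_ord (u y); subst; lia.
by apply: desc; rewrite // !inE negb_or ?xk ?xl ?yk ?yl.
Qed.

Lemma w_root_shape_comp s i j k l w : w_root_shape i j w -> s k = i -> s l = j ->
    (forall x y, x < y -> x \notin [:: k; l] -> y \notin [:: k; l] -> s x < s y) ->
  w_root_shape k l (s * w)%g.
Proof.
move=> [wi wj desc] ski slj mono; split; rewrite ?permM ?ski ?slj // => x y xy xkl ykl.
have notin z : z \notin [:: k; l] -> s z \notin [:: i; j].
  by rewrite -ski -slj -[[:: s k; s l]]/(map s [:: k; l]) (mem_map perm_inj).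
by rewrite !permM; apply: desc; rewrite ?notin //; exact: mono.
Qed.

Lemma w_root_shape_move_first i j p w : w_root_shape i j w -> i != j -> i < p -> p != j ->
    (forall x, i < x < p -> x == j) ->
  w_root_shape p j (tperm i p * w)%g.
Proof.
move=> shape ij ip pj between.
apply: (w_root_shape_comp shape); [exact: tpermR | by rewrite tpermD |].
move=> x y xy; rewrite !inE !negb_or => /andP [xp xj] /andP [yp yj].
apply: tperm_lt; rewrite ?(negPf yp) // => /eqP exi; subst x.
by move: (between y) yp yj; rewrite -!val_eqE /=; lia.
Qed.

Lemma w_root_shape_move_last i j q w : w_root_shape i j w -> i != j -> q < j -> q != i ->
    (forall x, q < x < j -> x == i) ->
  w_root_shape i q (tperm q j * w)%g.
Proof.
move=> shape ij qj qi between.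
apply: (w_root_shape_comp shape); [by rewrite tpermD // eq_sym | exact: tpermL |].
move=> x y xy; rewrite !inE !negb_or => /andP [xi xq] /andP [yi yq].
apply: tperm_lt; rewrite ?(negPf xq) // => /eqP eyj; subst y.
by move: (between x) xi xq; rewrite -!val_eqE /=; lia.
Qed.

Lemma w_root_shape_swap i j w : w_root_shape i j w -> i < j ->
  w_root_shape j i (tperm i j * w)%g.
Proof.
move=> shape ij; apply: (w_root_shape_comp shape); [exact: tpermR | exact: tpermL |].
move=> x y xy; rewrite !inE !negb_or => /andP [xj xi] /andP [yj yi].
by apply: tperm_lt; rewrite ?(negPf xi) ?(negPf yj).
Qed.

Lemma is_w_root_inv_first k l u c : is_w_root k l u -> (c : nat) = 0 -> (u^-1)%g c = k.
Proof. by move=> [uk _ _] c0; apply: (canLR (permK u)); apply: val_inj; rewrite /= uk. Qed.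

Lemma is_w_root_inv_last k l u c : is_w_root k l u -> (c : nat) = n.-1 -> (u^-1)%g c = l.
Proof. by move=> [_ ul _] cn; apply: (canLR (permK u)); apply: val_inj; rewrite /= ul. Qed.

Lemma is_w_root_inj i j k l u : is_w_root i j u -> is_w_root k l u -> k = i /\ l = j.
Proof.
move=> ij_u kl_u; have [ui uj _] := ij_u.
by rewrite -(is_w_root_inv_first kl_u ui) -(is_w_root_inv_last kl_u uj) !permK.
Qed.

Lemma bruhat_le_w_root i j k l u v : is_w_root i j u -> is_w_root k l v ->
  bruhat_le u v -> i <= k /\ l <= j.
Proof.
move=> ij_u kl_v uv; have [ui uj _] := ij_u.
rewrite -(is_w_root_inv_first ij_u ui) -(is_w_root_inv_first kl_v ui).
rewrite -(is_w_root_inv_last ij_u uj) -(is_w_root_inv_last kl_v uj).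
by split; [apply: bruhat_le_first | apply: bruhat_le_last].
Qed.
End Permutations.

Lemma hbar_le h J : hbar h J <= h J.
Proof. by rewrite /hbar; case: ifP => // _; case: ifP => // /andP [_ /eqP ->]; exact: leq_pred. Qed.

Section Hessenberg.
Variables (n : nat) (h : nat -> nat).
Hypothesis hh : hessenberg n h.

(* Monotonicity gives i <= k <= h(l) <= h(j), and with l < j even
   k <= h(l) <= h(j - 1); the two corner conditions rule out everything but
   k = i and l = j. *)
Lemma corner_maximal (i j k l : 'I_n) : corner h i.+1 j.+1 -> in_DeltaH h k l ->
  i <= k -> l <= j -> k = i /\ l = j.
Proof.
move=> [ci clt] [kl kh] ik lj; have {}kl : (k : nat) != l := kl.
suff [ki lj'] : (k : nat) = i /\ (l : nat) = j by split; apply: val_inj.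
case: hh => bnd mono.
have := bnd j.+1; have := bnd j; have := bnd j.-1; have := bnd l.+1.
have := mono l.+1 j.+1; have := mono l.+1 j; have := mono l.+1 j.-1; have := ltn_ord j.
move: ci clt; rewrite /hbar /h0 /=; do !case: ifP; lia.
Qed.

Lemma not_corner_move (i j : 'I_n) : in_DeltaH h i j -> ~ corner h i.+1 j.+1 ->
  [\/ exists p : 'I_n, [/\ i < p, p != j, in_DeltaH h p j & forall x : 'I_n, i < x < p -> x == j],
      exists q : 'I_n, [/\ q < j, q != i, in_DeltaH h i q & forall x : 'I_n, q < x < j -> x == i] |
      i < j /\ in_DeltaH h j i].
Proof.
move=> [ij ih] not_corner; have {}ij : (i : nat) != j := ij.
case: hh => bnd _.
(* P is the position after i and Q1 the (1-based) position before j, skipping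
   the other special position; if neither move stays in Delta_H and the swap
   (j, i) is not a root of H either, then (i, j) is a corner. *)
pose P := if i.+1 == j then i.+2 else i.+1.
have [Ph|hP] := leqP P.+1 (h j.+1).
  have Pn : P < n by move: Ph; have := bnd j.+1; have := ltn_ord j; rewrite /P; case: ifP; lia.
  apply: Or31; exists (Ordinal Pn); rewrite /in_DeltaH -!val_eqE /=.
  by split=> [|||x]; move: Ph; rewrite /P; case: ifP; rewrite -?val_eqE /=; lia.
pose Q1 := if (j : nat) == i.+1 then (i : nat) else j.
have [Qok|Qbad] := boolP ((0 < Q1) && (i.+1 <= h Q1)).
  have Qn : Q1.-1 < n by have := ltn_ord j; have := ltn_ord i; rewrite /Q1; case: ifP; lia.
  apply: Or32; exists (Ordinal Qn); rewrite /in_DeltaH -!val_eqE /= prednK; last by case/andP: Qok.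
  by split=> [|||x]; move: Qok; rewrite /Q1; case: ifP; rewrite -?val_eqE /=; lia.
have [swap|noswap] := boolP ((i < j) && (j.+1 <= h i.+1)).
  by apply: Or33; rewrite /in_DeltaH -val_eqE /= eq_sym; lia.
exfalso; apply: not_corner; move: Qbad noswap hP ih.
have hij : (i.+1 = j :> nat) -> h i.+1 = h j by move=> ->.
have hji : j.-1 = i -> h j.-1 = h i by move=> ->.
have := bnd j.+1; have := bnd j; have := bnd i.+1; have := bnd i; have := ltn_ord j.
rewrite /corner /hbar /h0 /Q1 /P /=; do !case: ifP; lia.
Qed.
End Hessenberg.

Lemma swap_not_maximal (h : nat -> nat) (n : nat) (w : {perm 'I_n}) (q p k l : 'I_n) :
  q < p -> w q < w p -> in_DeltaH h k l -> w_root_shape k l (tperm q p * w)%g ->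
  exists v, in_OmegaH h v /\ bruhat_lt w v.
Proof.
move=> qp wqp kl shape; exists (tperm q p * w)%g; split; last exact: bruhat_lt_swap.
by exists k, l; split; last apply/is_w_rootP.
Qed.

Lemma not_corner_not_maximal (n : nat) (h : nat -> nat) (i j : 'I_n) (w : {perm 'I_n}) :
  2 <= n -> hessenberg n h -> in_DeltaH h i j -> w_root_shape i j w ->
  ~ corner h i.+1 j.+1 -> exists v, in_OmegaH h v /\ bruhat_lt w v.
Proof.
move=> n2 hh ij_root shape not_corner; have [wi wj _] := shape; have [ij _] := ij_root.
case: (not_corner_move hh ij_root not_corner) => [[p [ip pj pj_root between]]|
    [q [qj qi iq_root between]]|[lt_ij ji_root]].
- apply: (swap_not_maximal ip _ pj_root); last exact: w_root_shape_move_first.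
  have pi : p != i by rewrite neq_ltn ip orbT.
  by have := perm_val_neq w pi; rewrite wi; lia.
- apply: (swap_not_maximal qj _ iq_root); last exact: w_root_shape_move_last.
  have qj' : q != j by rewrite neq_ltn qj.
  by have := perm_val_neq w qj'; have := ltn_ord (w q); rewrite wj; lia.
- apply: (swap_not_maximal lt_ij _ ji_root); last exact: w_root_shape_swap.
  by rewrite wi wj; lia.
Qed.

Theorem mainTheorem14 (n : nat) (h : nat -> nat) (i j : 'I_n) (w : {perm 'I_n}) :
  2 <= n -> hessenberg n h -> i != j -> is_w_root i j w ->
  (maximal_in_OmegaH h w <-> corner h i.+1 j.+1).
Proof.
move=> n2 hh ij wroot; split=> [[[k [l [kl_root klw]]] maximal]|corner_ij].
  have [ki lj] := is_w_root_inj wroot klw; subst k l.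
  have [/andP [/eqP ci clt]|not_corner] :=
    boolP ((i.+1 == hbar h j.+1) && (hbar h j < hbar h j.+1)); first by split.
  case: maximal; apply: (not_corner_not_maximal n2 hh kl_root); first exact/is_w_rootP.
  by move=> [ci clt]; rewrite ci eqxx clt in not_corner.
have ij_root : in_DeltaH h i j.
  by split=> //; case: corner_ij => -> _; exact: hbar_le.
split=> [|[v [[k [l [kl_root klv]]] [wv w_ne_v]]]]; first by exists i, j.
have [le_ik le_lj] := bruhat_le_w_root wroot klv wv.
have [ki lj] := corner_maximal hh corner_ij kl_root le_ik le_lj; subst k l.
have [_ _ longest_w] := wroot; have [vi vj _] := klv.
by have := bruhat_lt_length (conj wv w_ne_v); rewrite ltnNge longest_w.
Qed.
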